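(* Let $a,b,g,m,n>0$ and $0<e<1$, and consider the planar system $$\dot x=a-ex-\frac{xy}{1+gy},\qquad \dot y=\frac{xy}{1+gy}-y-\frac{my}{b+ny}.$$ Let $a_1=(eg+1)n$, $a_2=(b+m)(eg+1)+n(e-a)$, and $$a_4=\frac{[en-(b-m)(eg+1)]+\sqrt{4m(eg+1)[ne-b(eg+1)]}}{n}.$$ Suppose $n>\frac{(eg+1)b^2+m(eg+1)b}{me}$ and $a=a_4$. Let $y_3=-\frac{a_2}{2a_1}$ and $x_3=\frac{a(1+gy_3)}{e+(eg+1)y_3}$, so that $E_3=(x_3,y_3)$ is an endemic equilibrium of the system. Then $E_3$ is degenerate, i.e. the determinant of the Jacobian matrix of the system at $E_3$ is zero.
   Context: The system is a rescaled SIR epidemic model with saturated infection rate and saturated treatment rate. *)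

From Stdlib Require Import Reals.
From Coquelicot Require Import Coquelicot.
Open Scope R_scope.

Definition fx (a e g : R) (x y : R) : R := a - e * x - x * y / (1 + g * y).
Definition fy (b g m n : R) (x y : R) : R :=
  x * y / (1 + g * y) - y - m * y / (b + n * y).

Definition J11 a e g x y := Derive (fun u => fx a e g u y) x.
Definition J12 a e g x y := Derive (fun v => fx a e g x v) y.
Definition J21 b g m n x y := Derive (fun u => fy b g m n u y) x.
Definition J22 b g m n x y := Derive (fun v => fy b g m n x v) y.

Definition jac_det (a b e g m n x y : R) : R :=
  J11 a e g x y * J22 b g m n x y - J12 a e g x y * J21 b g m n x y.

Definition a1 (e g n : R) : R := (e * g + 1) * n.
Definition a2 (a b e g m n : R) : R := (b + m) * (e * g + 1) + n * (e - a).
Definition a4 (b e g m n : R) : R :=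
  ((e * n - (b - m) * (e * g + 1)) + sqrt (4 * m * (e * g + 1) * (n * e - b * (e * g + 1)))) / n.

(** On the x-nullcline x = a (1 + g y) / (e + k y), with k = e g + 1, the
    Jacobian determinant vanishes exactly when e a r^2 = (e + k y)^2 (r^2 + m b),
    where r = b + n y.  For a = a4 the root y3 satisfies r = sqrt D / (2 k),
    D being the radicand in a4, i.e. k r^2 = m (e n - k b).  This relation
    expresses e = k (r^2 + b m) / (m n), a = k (r + m)^2 / (m n) and
    e + k y3 = k r (r + m) / (m n) through r alone, and the degeneracy
    condition becomes an identity. *)
From Stdlib Require Import Reals Lra Psatz.
From Coquelicot Require Import Coquelicot.
Open Scope R_scope.

Lemma J11_eq a e g x y :
  1 + g * y <> 0 -> J11 a e g x y = - e - y / (1 + g * y).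
Proof.
  intros Hp; unfold J11, fx; apply is_derive_unique.
  auto_derive; [auto | field; auto].
Qed.

Lemma J12_eq a e g x y :
  1 + g * y <> 0 -> J12 a e g x y = - x / (1 + g * y) ^ 2.
Proof.
  intros Hp; unfold J12, fx; apply is_derive_unique.
  auto_derive; [auto | field; auto].
Qed.

Lemma J21_eq b g m n x y :
  1 + g * y <> 0 -> b + n * y <> 0 -> J21 b g m n x y = y / (1 + g * y).
Proof.
  intros Hp Hr; unfold J21, fy; apply is_derive_unique.
  auto_derive; [tauto | field; auto].
Qed.

Lemma J22_eq b g m n x y :
  1 + g * y <> 0 -> b + n * y <> 0 ->
  J22 b g m n x y = x / (1 + g * y) ^ 2 - 1 - m * b / (b + n * y) ^ 2.
Proof.
  intros Hp Hr; unfold J22, fy; apply is_derive_unique.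
  auto_derive; [tauto | field; auto].
Qed.

Lemma jac_det_on_x_nullcline a b e g m n y :
  let p := 1 + g * y in
  let q := e + (e * g + 1) * y in
  let r := b + n * y in
  p <> 0 -> q <> 0 -> r <> 0 ->
  jac_det a b e g m n (a * p / q) y
  = (q ^ 2 * (r ^ 2 + m * b) - e * a * r ^ 2) / (p * q * r ^ 2).
Proof.
  intros p q r Hp Hq Hr; unfold jac_det.
  rewrite J11_eq, J12_eq, J21_eq, J22_eq by auto.
  unfold p, q, r in *; field; auto.
Qed.

Lemma degeneracy_identity a b e k m n r y :
  m <> 0 -> n <> 0 ->
  r = b + n * y ->
  k * r ^ 2 = m * (e * n - k * b) ->
  a * n = e * n - (b - m) * k + 2 * k * r ->
  e * a * r ^ 2 = (e + k * y) ^ 2 * (r ^ 2 + m * b).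
Proof.
  intros Hm Hn Hr Hdisc Ha.
  assert (He : e = k * (r ^ 2 + b * m) / (m * n)).
  { apply Rmult_eq_reg_r with (m * n); [| now apply Rmult_integral_contrapositive].
    field_simplify; [| auto ..]. lra. }
  assert (Ha' : a = k * (r + m) ^ 2 / (m * n)).
  { apply Rmult_eq_reg_r with n; [| auto]. rewrite Ha, He. field; auto. }
  assert (Hy : y = (r - b) / n) by (rewrite Hr; field; auto).
  rewrite Ha', He, Hy. field; auto.
Qed.

Lemma sqr_lt_disc b e k m n :
  0 < b -> 0 < k -> 0 < m -> 0 < e ->
  n > (k * b ^ 2 + m * k * b) / (m * e) ->
  (2 * b * k) ^ 2 < 4 * m * k * (n * e - b * k).
Proof.
  intros Hb Hk Hm He Hn.
  assert (Hme : 0 < m * e) by nra.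
  apply Rmult_gt_compat_r with (r := m * e) in Hn; [| lra].
  unfold Rdiv in Hn; rewrite Rmult_assoc, Rinv_l in Hn by lra.
  nra.
Qed.

Lemma a4_equilibrium a b e g m n :
  0 < b -> 0 < g -> 0 < m -> 0 < n -> 0 < e ->
  n > ((e * g + 1) * b ^ 2 + m * (e * g + 1) * b) / (m * e) ->
  a = a4 b e g m n ->
  let k := e * g + 1 in
  let y := - a2 a b e g m n / (2 * a1 e g n) in
  let r := b + n * y in
  0 < y /\ k * r ^ 2 = m * (e * n - k * b) /\
  a * n = e * n - (b - m) * k + 2 * k * r.
Proof.
  intros Hb Hg Hm Hn He Hn_big Ha4 k y r.
  assert (Hk : 0 < k) by (unfold k; nra).
  assert (Hdisc_gt := sqr_lt_disc b e k m n Hb Hk Hm He Hn_big).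
  set (s := sqrt (4 * m * k * (n * e - b * k))) in *.
  assert (Hs : 2 * b * k < s).
  { rewrite <- (sqrt_pow2 (2 * b * k)) by nra. apply sqrt_lt_1_alt; nra. }
  assert (Hs2 : s ^ 2 = 4 * m * k * (n * e - b * k)) by (apply pow2_sqrt; nra).
  assert (Han : a * n = e * n - (b - m) * k + s)
    by (rewrite Ha4; unfold a4; fold k s; field; lra).
  assert (Hy : y = (s - 2 * b * k) / (2 * k * n)).
  { unfold y, a2, a1; fold k.
    replace ((b + m) * k + n * (e - a)) with (2 * b * k - s)
      by (rewrite Rmult_minus_distr_l, (Rmult_comm n a), Han; ring).
    field; lra. }
  assert (Hsr : s = 2 * k * r) by (unfold r; rewrite Hy; field; lra).
  split; [| split].
  - rewrite Hy; apply Rdiv_lt_0_compat; nra.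
  - nra.
  - rewrite Han, Hsr; reflexivity.
Qed.

Theorem theorem2p2 (a b e g m n : R) :
  0 < a -> 0 < b -> 0 < g -> 0 < m -> 0 < n -> 0 < e -> e < 1 ->
  n > ((e * g + 1) * b ^ 2 + m * (e * g + 1) * b) / (m * e) ->
  a = a4 b e g m n ->
  let y3 := - a2 a b e g m n / (2 * a1 e g n) in
  let x3 := a * (1 + g * y3) / (e + (e * g + 1) * y3) in
  jac_det a b e g m n x3 y3 = 0.
Proof.
  intros Ha Hb Hg Hm Hn He He1 Hn_big Ha4 y3 x3.
  destruct (a4_equilibrium a b e g m n Hb Hg Hm Hn He Hn_big Ha4)
    as (Hy3 & Hdisc & Han).
  fold y3 in Hy3, Hdisc, Han.
  assert (Hp : 1 + g * y3 <> 0) by (apply Rgt_not_eq; nra).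
  assert (Hq : e + (e * g + 1) * y3 <> 0) by (apply Rgt_not_eq; nra).
  assert (Hr : b + n * y3 <> 0) by (apply Rgt_not_eq; nra).
  unfold x3; rewrite jac_det_on_x_nullcline by assumption.
  rewrite (degeneracy_identity a b e (e * g + 1) m n (b + n * y3) y3)
    by (reflexivity || lra).
  unfold Rminus; rewrite Rplus_opp_r; apply Rdiv_0_l.
Qed.
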